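(* The intersection $\bigcap_{e\ge 1}\hat G^{(e)}$ equals $PGL_2(F)$ (viewed inside $\mathrm{Aut}(X_{PGL_2(F)})$), and $PGL_2(F)\subseteq \hat G^{(e+1)}\subseteq\hat G^{(e)}\subseteq \mathrm{Aut}(X_{PGL_2(F)})$ for all $e\ge1$.
   Context: Let $F$ be a non-archimedean local field with ring of integers $\mathfrak{o}$, uniformizer $\varpi$, and finite residue field of cardinality $q$. $X=X_{PGL_2(F)}$ is the Bruhat–Tits tree of $PGL_2(F)$: its vertices are homothety classes $[L]$ (under $F^\times$) of $\mathfrak{o}$-lattices $L\subset F^2$, and $[L],[L']$ are joined by an edge iff there are representatives with $\varpi L\subsetneq L'\subsetneq L$; it is a $(q+1)$-regular tree. $d$ is the path-length distance on vertices; $\mathrm{Aut}(X)$ is the group of distance-preserving bijections of the vertex set, with the topology of pointwise convergence. $GL_2(F)$ acts on lattices through its linear action on $F^2$, the centre acts trivially, and this gives an embedding $PGL_2(F)\hookrightarrow\mathrm{Aut}(X)$. For an edge $\eta=\{x_1,x_2\}$ and $e\ge1$, $B(\eta,e)=\{y: \min(d(y,x_1),d(y,x_2))\le e\}$. Define $\hat G^{(e)}=\{g\in\mathrm{Aut}(X):\ \text{for every edge }\eta\ \text{there is } g'\in PGL_2(F)\text{ with } g|_{B(\eta,e)}=g'|_{B(\eta,e)}\}$. *)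

From HB Require Import structures.
From mathcomp Require Import all_boot all_order all_algebra.
Set Implicit Arguments. Unset Strict Implicit. Unset Printing Implicit Defensive.
Import Order.TTheory GRing.Theory Num.Theory.
Local Open Scope ring_scope.

(* A field F with a normalized discrete valuation v : F^x -> Z (the value of
   v at 0 is irrelevant), complete, with finite residue field. *)

Definition in_o (F : fieldType) (v : F -> int) (x : F) : Prop :=
  x = 0 \/ 0 <= v x.

Definition in_m (F : fieldType) (v : F -> int) (x : F) : Prop :=
  x = 0 \/ 0 < v x.

Definition is_nonarch_local_field (F : fieldType) (v : F -> int) : Prop :=
  (forall x y : F, x != 0 -> y != 0 -> v (x * y) = v x + v y) /\
  (forall x y : F, x != 0 -> y != 0 -> x + y != 0 ->
      Num.min (v x) (v y) <= v (x + y)) /\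
  (forall n : int, exists x : F, x != 0 /\ v x = n) /\
  (forall u : nat -> F,
     (forall N : int, exists M : nat, forall m n : nat, (M <= m)%N -> (M <= n)%N ->
        u m = u n \/ N <= v (u m - u n)) ->
     exists l : F, forall N : int, exists M : nat, forall n : nat, (M <= n)%N ->
        u n = l \/ N <= v (u n - l)) /\
  (* finite residue field o / m *)
  (exists s : seq F, (forall y, y \in s -> in_o v y) /\
     forall x, in_o v x -> exists2 y, y \in s & in_m v (x - y)).

Definition vset (F : fieldType) := 'rV[F]_2 -> Prop.

Definition is_lattice (F : fieldType) (v : F -> int) (L : vset F) : Prop :=
  exists B : 'M[F]_2, B \in unitmx /\
    forall x, L x <-> exists a b : F, in_o v a /\ in_o v b /\
                 x = a *: row 0 B + b *: row 1 B.

Definition scale_set (F : fieldType) (c : F) (L : vset F) : vset F :=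
  fun x => exists y, L y /\ x = c *: y.

Definition img_set (F : fieldType) (g : 'M[F]_2) (L : vset F) : vset F :=
  fun x => exists y, L y /\ x = y *m g.

Definition strict_sub (F : fieldType) (A B : vset F) : Prop :=
  (forall x, A x -> B x) /\ exists x, B x /\ ~ A x.

Definition homclass (F : fieldType) (v : F -> int) (L : vset F) : vset F -> Prop :=
  fun L' => is_lattice v L' /\
    exists c : F, c != 0 /\ forall x, L' x <-> scale_set c L x.

(* vertices of the Bruhat-Tits tree: homothety classes of lattices *)
Definition vertex (F : fieldType) (v : F -> int) : Type :=
  { C : vset F -> Prop | exists L, is_lattice v L /\ C = homclass v L }.

Definition adj (F : fieldType) (v : F -> int) (x y : vertex v) : Prop :=
  exists (L L' : vset F) (pi : F),
    sval x L /\ sval y L' /\ pi != 0 /\ v pi = 1 /\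
    strict_sub (scale_set pi L) L' /\ strict_sub L' L.

Fixpoint walk (F : fieldType) (v : F -> int) (x y : vertex v) (k : nat) : Prop :=
  match k with
  | O => x = y
  | S k' => exists z, adj x z /\ walk z y k'
  end.

Definition dist_is (F : fieldType) (v : F -> int) (x y : vertex v) (n : nat) : Prop :=
  walk x y n /\ forall k, (k < n)%N -> ~ walk x y k.

Definition dist_le (F : fieldType) (v : F -> int) (x y : vertex v) (e : nat) : Prop :=
  exists k, (k <= e)%N /\ walk x y k.

Definition isAut (F : fieldType) (v : F -> int) (f : vertex v -> vertex v) : Prop :=
  bijective f /\ forall x y n, dist_is x y n <-> dist_is (f x) (f y) n.

Definition induced_by (F : fieldType) (v : F -> int) (g : 'M[F]_2)
  (f : vertex v -> vertex v) : Prop :=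
  forall (x : vertex v) (L : vset F), sval x L -> sval (f x) (img_set g L).

Definition inPGL (F : fieldType) (v : F -> int) (f : vertex v -> vertex v) : Prop :=
  exists g : 'M[F]_2, g \in unitmx /\ induced_by g f.

Definition in_ball (F : fieldType) (v : F -> int) (x1 x2 : vertex v) (e : nat)
  (y : vertex v) : Prop := dist_le y x1 e \/ dist_le y x2 e.

Definition Ghat (F : fieldType) (v : F -> int) (e : nat)
  (f : vertex v -> vertex v) : Prop :=
  isAut f /\
  forall x1 x2 : vertex v, adj x1 x2 ->
    exists f' : vertex v -> vertex v, inPGL f' /\
      forall y, in_ball x1 x2 e y -> f y = f' y.

From HB Require Import structures.
From mathcomp Require Import all_boot all_order all_algebra.
From mathcomp Require Import ring zify.
From Stdlib Require Import FunctionalExtensionality PropExtensionality ProofIrrelevance.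
From Stdlib Require Import ClassicalEpsilon Classical.
Set Implicit Arguments. Unset Strict Implicit. Unset Printing Implicit Defensive.
Import Order.TTheory GRing.Theory Num.Theory.
Local Open Scope ring_scope.

(* The inclusions  PGL_2(F) <= Ghat (e+1) <= Ghat e <= Aut(X)  are formal: a
   matrix g induces a tree automorphism (invmx g induces its inverse, and both
   map walks to walks), it agrees with itself on every ball, and balls grow
   with e.  The content of the theorem is that an automorphism f lying in
   every Ghat e is induced by a matrix.

   Let x0 = [o^2] be the base vertex and pi a uniformizer.  Applying the
   hypothesis to one edge at x0 gives matrices g_n inducing f on the ball of
   radius n+1 around x0.  Two matrices inducing the same map on the ball of
   radius m around x0 differ by an element of F^x (1 + pi^m M_2(o)), because
   they agree at x0 and at three test vertices at distance m.  So the g_n,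
   suitably rescaled, are P_n g_0 with (P_n) Cauchy in M_2(o); by completeness
   P_n -> P.  Finally a vertex at distance k from x0 has a representative L
   with pi^k o^2 <= L <= o^2, which the congruence subgroup 1 + pi^k M_2(o)
   fixes; hence P g_0 and g_k induce the same class on it, and P g_0 induces f. *)

Section Tree.
Variable (F : fieldType) (v : F -> int).
Hypothesis vM : forall x y : F, x != 0 -> y != 0 -> v (x * y) = v x + v y.
Hypothesis vU : forall x y : F, x != 0 -> y != 0 -> x + y != 0 ->
      Num.min (v x) (v y) <= v (x + y).

Implicit Types (g : 'M[F]_2) (c d : F).

Definition vge (m : int) (x : F) := x = 0 \/ m <= v x.

Lemma v1 : v 1 = 0.
Proof.
have twice : forall a : int, a = a + a -> a = 0 by move=> a; lia.
by apply: twice; have := vM (oner_neq0 F) (oner_neq0 F); rewrite mulr1.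
Qed.

Lemma vN1 : v (-1) = 0.
Proof.
have n1 : (-1 : F) != 0 by rewrite oppr_eq0 oner_neq0.
have twice : forall a : int, 0 = a + a -> a = 0 by move=> a; lia.
by apply: twice; have := vM n1 n1; rewrite mulrNN mulr1 v1.
Qed.

Lemma vN x : v (- x) = v x.
Proof.
have [->|nx] := eqVneq x 0; first by rewrite oppr0.
have n1 : (-1 : F) != 0 by rewrite oppr_eq0 oner_neq0.
by rewrite -mulN1r vM // vN1 add0r.
Qed.

Lemma vV x : x != 0 -> v (x^-1) = - v x.
Proof.
move=> nx; have ni : x^-1 != 0 by rewrite invr_eq0.
have opp : forall a b : int, 0 = a + b -> b = - a by move=> a b; lia.
by apply: opp; have := vM nx ni; rewrite mulfV // v1.
Qed.

Lemma vX pi n : pi != 0 -> v pi = 1 -> pi ^+ n != 0 /\ v (pi ^+ n) = n%:Z.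
Proof.
move=> np vp; elim: n => [|n [nz IH]]; first by rewrite expr0 oner_neq0 v1.
rewrite exprS mulf_neq0 //; split => //; rewrite vM // vp IH; lia.
Qed.

Lemma vge0 m : vge m 0. Proof. by left. Qed.

Lemma vge1 m : m <= 0 -> vge m 1.
Proof. by move=> h; right; rewrite v1. Qed.

Lemma vge_le m n x : n <= m -> vge m x -> vge n x.
Proof. move=> h [->|h2]; [by left|right; lia]. Qed.

Lemma vgeD m x y : vge m x -> vge m y -> vge m (x + y).
Proof.
move=> [->|hx]; first by rewrite add0r.
move=> [->|hy]; first by rewrite addr0; right.
have [e0|ne] := eqVneq (x + y) 0; first by left.
have [->|nx] := eqVneq x 0; first by rewrite add0r; right.
have [->|ny] := eqVneq y 0; first by rewrite addr0; right.
right; have := vU nx ny ne.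
case: (leP (v x) (v y)) => _; lia.
Qed.

Lemma vgeN m x : vge m x -> vge m (- x).
Proof. move=> [->|h]; [by rewrite oppr0; left|by right; rewrite vN]. Qed.

Lemma vgeB m x y : vge m x -> vge m y -> vge m (x - y).
Proof. by move=> hx hy; apply: vgeD => //; apply: vgeN. Qed.

Lemma vgeM m n x y : vge m x -> vge n y -> vge (m + n) (x * y).
Proof.
move=> [->|hx]; first by rewrite mul0r; left.
move=> [->|hy]; first by rewrite mulr0; left.
have [->|nx] := eqVneq x 0; first by rewrite mul0r; left.
have [->|ny] := eqVneq y 0; first by rewrite mulr0; left.
right; rewrite vM //; lia.
Qed.

Lemma vgeMr m x y : vge m x -> vge 0 y -> vge m (x * y).
Proof. by move=> hx hy; have := vgeM hx hy; rewrite addr0. Qed.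

Lemma vge_unitV x : x != 0 -> v x = 0 -> vge 0 (x^-1).
Proof. by move=> nx h; right; rewrite vV // h. Qed.

Lemma not_vge m x : x != 0 -> v x < m -> ~ vge m x.
Proof. move=> nx h [e|h2]; [by move: nx; rewrite e eqxx|lia]. Qed.

Lemma vge0_cases x : vge 0 x -> vge 1 x \/ (x != 0 /\ v x = 0).
Proof.
case=> [->|h]; first by left; left.
have [->|nx] := eqVneq x 0; first by left; left.
have [h1|h1] := leP 1 (v x); first by left; right.
right; split => //; lia.
Qed.

Lemma unit1D z : vge 1 z -> 1 + z != 0 /\ v (1 + z) = 0.
Proof.
move=> hz.
have nz : 1 + z != 0.
  apply/negP => /eqP e; have ez : z = -1 by apply/eqP; rewrite -addr_eq0 addrC e.
  by move: hz; rewrite ez => -[/eqP|]; [rewrite oppr_eq0 oner_eq0|rewrite vN1].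
split => //.
have hz0 : vge 0 z by apply: vge_le hz.
have [h1|[_ //]] := vge0_cases (vgeD (vge1 (lexx 0)) hz0).
have := vgeB h1 hz; rewrite addrK => -[/eqP|]; [by rewrite oner_eq0|rewrite v1; lia].
Qed.

Lemma unit_prod a b : vge 0 a -> vge 0 b -> a * b = 1 -> a != 0 /\ v a = 0.
Proof.
move=> ha hb e.
have na : a != 0 by apply/eqP => a0; move: e; rewrite a0 mul0r => /eqP; rewrite eq_sym oner_eq0.
have nb : b != 0 by apply/eqP => b0; move: e; rewrite b0 mulr0 => /eqP; rewrite eq_sym oner_eq0.
split => //; have := vM na nb; rewrite e v1.
case: ha => [/eqP|ha]; first by rewrite (negbTE na).
case: hb => [/eqP|hb]; first by rewrite (negbTE nb).
lia.
Qed.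

Lemma ord2 (i : 'I_2) : i = 0 \/ i = 1.
Proof. case: i => [[|[|//]]] Hi; [left|right]; exact: val_inj. Qed.

Lemma mul2E m n (A : 'M[F]_(m, 2)) (B : 'M[F]_(2, n)) i j :
  (A *m B) i j = A i 0 * B 0 j + A i 1 * B 1 j.
Proof.
have e0 : (ord0 : 'I_2) = 0 by apply: val_inj.
have e1 : lift ord0 (ord0 : 'I_1) = 1 :> 'I_2 by apply: val_inj.
by rewrite mxE big_ord_recl big_ord1 e0 e1.
Qed.

Lemma mxeq (A B : 'M[F]_2) :
  A 0 0 = B 0 0 -> A 0 1 = B 0 1 -> A 1 0 = B 1 0 -> A 1 1 = B 1 1 -> A = B.
Proof.
move=> h00 h01 h10 h11; apply/matrixP => i j.
by case: (ord2 i) => ->; case: (ord2 j) => ->.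
Qed.

Definition mk2 (a b c d : F) : 'M[F]_2 :=
  \matrix_(i, j) (if i == 0 then (if j == 0 then a else b) else (if j == 0 then c else d)).

Definition rv2 (a b : F) : 'rV[F]_2 := \row_j (if j == 0 then a else b).

Lemma rv2_mul a b (B : 'M[F]_2) : rv2 a b *m B = a *: row 0 B + b *: row 1 B.
Proof. by apply/rowP => j; rewrite mul2E !mxE. Qed.

Lemma rv2_eta (u : 'rV[F]_2) : u = rv2 (u 0 0) (u 0 1).
Proof. by apply/rowP => j; rewrite !mxE; case: (ord2 j) => ->. Qed.

Definition det2 (A : 'M[F]_2) := A 0 0 * A 1 1 - A 0 1 * A 1 0.

Definition adj2 (A : 'M[F]_2) : 'M[F]_2 := mk2 (A 1 1) (- A 0 1) (- A 1 0) (A 0 0).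

Lemma adj2E (A : 'M[F]_2) :
  A *m adj2 A = det2 A *: 1%:M /\ adj2 A *m A = det2 A *: 1%:M.
Proof.
split; apply/matrixP => i j; rewrite mul2E !mxE /det2;
  (case: (ord2 i) => ->; case: (ord2 j) => -> /=); rewrite ?mulr1 ?mulr0; ring.
Qed.

Lemma det2_adj2 (A : 'M[F]_2) : det2 (adj2 A) = det2 A.
Proof. by rewrite /det2 !mxE /=; ring. Qed.

Lemma det2M (A B : 'M[F]_2) : det2 (A *m B) = det2 A * det2 B.
Proof. rewrite /det2 !mul2E; ring. Qed.

Lemma det2Z c (A : 'M[F]_2) : det2 (c *: A) = c ^+ 2 * det2 A.
Proof. by rewrite /det2 !mxE; ring. Qed.

Lemma det2_1 : det2 (1%:M : 'M[F]_2) = 1.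
Proof. by rewrite /det2 !mxE /=; ring. Qed.

Lemma det2_1D (Y : 'M[F]_2) : det2 (1%:M + Y) = 1 + (Y 0 0 + Y 1 1 + det2 Y).
Proof. rewrite /det2 !mxE /=; ring. Qed.

Definition inv2 (A : 'M[F]_2) := (det2 A)^-1 *: adj2 A.

Lemma inv2E (A : 'M[F]_2) : det2 A != 0 -> A *m inv2 A = 1%:M /\ inv2 A *m A = 1%:M.
Proof.
move=> nd; have [h1 h2] := adj2E A; rewrite /inv2; split.
  by rewrite -scalemxAr h1 scalerA mulVf // scale1r.
by rewrite -scalemxAl h2 scalerA mulVf // scale1r.
Qed.

Lemma det2_unit (B : 'M[F]_2) : B \in unitmx -> det2 B != 0.
Proof.
move=> uB; have := det2M B (invmx B); rewrite mulmxV // det2_1 => e.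
apply/negP => /eqP e0; move: e; rewrite e0 mul0r => e.
by move: (oner_neq0 F); rewrite -e eqxx.
Qed.

Lemma det2_unitmx (B : 'M[F]_2) : det2 B != 0 -> B \in unitmx.
Proof. by move=> nd; have [e _] := inv2E nd; case: (mulmx1_unit e). Qed.

Definition mx_vge m n (k : int) (A : 'M[F]_(m, n)) := forall i j, vge k (A i j).

Lemma mx_vge_le m n k l (A : 'M[F]_(m, n)) : l <= k -> mx_vge k A -> mx_vge l A.
Proof. by move=> h hA i j; apply: vge_le (hA i j). Qed.

Lemma mx_vge_mul m p k l (A : 'M[F]_(m, 2)) (B : 'M[F]_(2, p)) :
  mx_vge k A -> mx_vge l B -> mx_vge (k + l) (A *m B).
Proof. by move=> hA hB i j; rewrite mul2E; apply: vgeD; apply: vgeM. Qed.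

Lemma mx_vge_add m n k (A B : 'M[F]_(m, n)) :
  mx_vge k A -> mx_vge k B -> mx_vge k (A + B).
Proof. by move=> hA hB i j; rewrite mxE; apply: vgeD. Qed.

Lemma mx_vge_opp m n k (A : 'M[F]_(m, n)) : mx_vge k A -> mx_vge k (- A).
Proof. by move=> hA i j; rewrite mxE; apply: vgeN. Qed.

Lemma mx_vge_scale m n k l c (A : 'M[F]_(m, n)) :
  vge k c -> mx_vge l A -> mx_vge (k + l) (c *: A).
Proof. by move=> hc hA i j; rewrite mxE; apply: vgeM. Qed.

Lemma mx_vge0 m n k : mx_vge k (0 : 'M[F]_(m, n)).
Proof. by move=> i j; rewrite mxE; left. Qed.

Lemma mx_vge1 n : mx_vge 0 (1%:M : 'M[F]_n).
Proof. by move=> i j; rewrite mxE; case: (i == j) => /=; [exact: vge1|exact: vge0]. Qed.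

Lemma mx_vge_mk2 k a b c d :
  vge k a -> vge k b -> vge k c -> vge k d -> mx_vge k (mk2 a b c d).
Proof. by move=> ha hb hc hd i j; rewrite mxE; case: (ord2 i) => ->; case: (ord2 j) => ->. Qed.

Lemma mx_vge_rv2 a b : vge 0 a -> vge 0 b -> mx_vge 0 (rv2 a b).
Proof. by move=> ha hb i j; rewrite mxE; case: (ord2 j) => ->. Qed.

Lemma det2_vge k (A : 'M[F]_2) : mx_vge k A -> vge (k + k) (det2 A).
Proof. by move=> hA; apply: vgeB; apply: vgeM; apply: hA. Qed.

Lemma mx_vge_of1 (A : 'M[F]_2) : mx_vge 1 (A - 1%:M) -> mx_vge 0 A.
Proof.
move=> h; rewrite -[A](subrK 1%:M).
by apply: mx_vge_add; [apply: (mx_vge_le _ h); lia|exact: mx_vge1].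
Qed.

Lemma mx_vge_adj2 k (A : 'M[F]_2) : mx_vge k A -> mx_vge k (adj2 A).
Proof. by move=> hA; apply: mx_vge_mk2 => //; apply: vgeN. Qed.

Lemma inv2_int (A : 'M[F]_2) :
  mx_vge 0 A -> det2 A != 0 -> v (det2 A) = 0 -> mx_vge 0 (inv2 A).
Proof.
move=> hA nd vd; rewrite -[0]addr0.
exact: mx_vge_scale (vge_unitV nd vd) (mx_vge_adj2 hA).
Qed.

Lemma inv1D m (Y : 'M[F]_2) : 1 <= m -> mx_vge m Y ->
  exists Y', mx_vge m Y' /\
    (1%:M + Y') *m (1%:M + Y) = 1%:M /\ (1%:M + Y) *m (1%:M + Y') = 1%:M.
Proof.
move=> hm hY.
have hz : vge 1 (Y 0 0 + Y 1 1 + det2 Y).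
  apply: vgeD; first by apply: vgeD; apply: vge_le (hY _ _); lia.
  by apply: vge_le (det2_vge hY); lia.
have [nd vd] := unit1D hz; rewrite -det2_1D in nd vd.
have hI : mx_vge 0 (1%:M + Y) by apply: mx_vge_add; [exact: mx_vge1|apply: (mx_vge_le _ hY); lia].
have hZ := inv2_int hI nd vd.
have [e1 e2] := inv2E nd.
have eY : 1%:M + (inv2 (1%:M + Y) - 1%:M) = inv2 (1%:M + Y) by rewrite addrC subrK.
exists (inv2 (1%:M + Y) - 1%:M); rewrite eY; split => //.
have -> : inv2 (1%:M + Y) - 1%:M = - (inv2 (1%:M + Y) *m Y).
  by rewrite -{2}e2 mulmxDr mulmx1 opprD addrA subrr add0r.
by apply: mx_vge_opp; have := mx_vge_mul hZ hY; rewrite add0r.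
Qed.

Lemma congr_factor n (P Q : 'M[F]_2) : 1 <= n -> mx_vge 1 (P - 1%:M) ->
  mx_vge n (Q - P) -> exists Y, mx_vge n Y /\ Q = (1%:M + Y) *m P.
Proof.
move=> n1 hP hQ.
have [Y' [hY' [e1 _]]] := inv1D (lexx 1) hP.
have eP : 1%:M + (P - 1%:M) = P by rewrite addrC subrK.
rewrite eP in e1.
have hI : mx_vge 0 (1%:M + Y') by apply: mx_vge_add; [exact: mx_vge1|exact: mx_vge_le ler01 hY'].
exists ((Q - P) *m (1%:M + Y')); split; first by have := mx_vge_mul hQ hI; rewrite addr0.
by rewrite mulmxDl mul1mx -mulmxA e1 mulmx1 addrC subrK.
Qed.

Definition eqv (A B : vset F) := forall x, A x <-> B x.

Lemma eqv_sym A B : eqv A B -> eqv B A. Proof. by move=> h x; split; move/h. Qed.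
Lemma eqv_trans A B C : eqv A B -> eqv B C -> eqv A C.
Proof. by move=> h1 h2 x; rewrite h1 h2. Qed.

Definition latt (B : 'M[F]_2) : vset F :=
  fun x => exists u : 'rV[F]_2, mx_vge 0 u /\ x = u *m B.

Lemma latt_spanE B x :
  latt B x <-> exists a b : F, in_o v a /\ in_o v b /\ x = a *: row 0 B + b *: row 1 B.
Proof.
split.
  case=> u [hu ->]; exists (u 0 0), (u 0 1); do 2 (split; first exact: hu).
  by rewrite {1}[u]rv2_eta rv2_mul.
case=> a [b [ha [hb ->]]]; exists (rv2 a b); split; last by rewrite rv2_mul.
exact: mx_vge_rv2.
Qed.

Lemma lat_latt L : is_lattice v L <-> exists B, B \in unitmx /\ eqv L (latt B).
Proof.
split; case=> B [uB hB]; exists B; split => // x.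
  by rewrite hB latt_spanE.
by rewrite hB latt_spanE.
Qed.

Lemma latt_lat B : B \in unitmx -> is_lattice v (latt B).
Proof. by move=> uB; apply/lat_latt; exists B. Qed.

Lemma lat_eqv L L' : is_lattice v L -> eqv L L' -> is_lattice v L'.
Proof.
move=> /lat_latt [B [uB hB]] h; apply/lat_latt; exists B; split => //.
exact: eqv_trans (eqv_sym h) hB.
Qed.

Lemma lat_add L a b : is_lattice v L -> L a -> L b -> L (a + b).
Proof.
move=> /lat_latt [B [uB hB]] /hB [u [hu ->]] /hB [w [hw ->]]; apply/hB.
by exists (u + w); split; [exact: mx_vge_add|rewrite mulmxDl].
Qed.

Lemma latt_sub X Y U : mx_vge 0 U -> X = U *m Y -> forall x, latt X x -> latt Y x.
Proof.
move=> hU -> x [u [hu ->]]; exists (u *m U); split; last by rewrite mulmxA.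
by have := mx_vge_mul hu hU; rewrite addr0.
Qed.

Lemma latt_sub_mat (X Y : 'M[F]_2) :
  (forall x, latt X x -> latt Y x) -> exists U, mx_vge 0 U /\ X = U *m Y.
Proof.
move=> h.
have g1 := vge1 (lexx (0:int)).
have [u0 [hu0 e0]] := h (rv2 1 0 *m X) (ex_intro _ _ (conj (mx_vge_rv2 g1 (vge0 0)) erefl)).
have [u1 [hu1 e1]] := h (rv2 0 1 *m X) (ex_intro _ _ (conj (mx_vge_rv2 (vge0 0) g1) erefl)).
exists (mk2 (u0 0 0) (u0 0 1) (u1 0 0) (u1 0 1)); split.
  by apply: mx_vge_mk2; [exact: hu0|exact: hu0|exact: hu1|exact: hu1].
have E0 j := congr1 (fun M : 'rV[F]_2 => M 0 j) e0.
have E1 j := congr1 (fun M : 'rV[F]_2 => M 0 j) e1.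
apply: mxeq; rewrite !mul2E !mxE /=.
- by have := E0 0; rewrite /= !mul2E !mxE /= => <-; ring.
- by have := E0 1; rewrite /= !mul2E !mxE /= => <-; ring.
- by have := E1 0; rewrite /= !mul2E !mxE /= => <-; ring.
- by have := E1 1; rewrite /= !mul2E !mxE /= => <-; ring.
Qed.

Lemma scale_eqv c A B : eqv A B -> eqv (scale_set c A) (scale_set c B).
Proof. by move=> h x; split; case=> y [hy ->]; exists y; split => //; apply/h. Qed.

Lemma img_eqv g A B : eqv A B -> eqv (img_set g A) (img_set g B).
Proof. by move=> h x; split; case=> y [hy ->]; exists y; split => //; apply/h. Qed.

Lemma scale_latt c B : eqv (scale_set c (latt B)) (latt (c *: B)).
Proof.
move=> x; split.
  by case=> y [[u [hu ->]] ->]; exists u; split => //; rewrite scalemxAr.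
by case=> u [hu ->]; exists (u *m B); split; [exists u|rewrite scalemxAr].
Qed.

Lemma img_latt g B : eqv (img_set g (latt B)) (latt (B *m g)).
Proof.
move=> x; split.
  by case=> y [[u [hu ->]] ->]; exists u; split => //; rewrite mulmxA.
by case=> u [hu ->]; exists (u *m B); split; [exists u|rewrite mulmxA].
Qed.

Lemma scale_scale c d A : eqv (scale_set c (scale_set d A)) (scale_set (c * d) A).
Proof.
move=> x; split.
  by case=> y [[z [hz ->]] ->]; exists z; split => //; rewrite scalerA.
by case=> z [hz ->]; exists (d *: z); split; [exists z|rewrite scalerA].
Qed.

Lemma scale1 A : eqv (scale_set 1 A) A.
Proof.
move=> x; split; first by case=> y [hy ->]; rewrite scale1r.
by move=> hx; exists x; rewrite scale1r.
Qed.

Lemma scaleK c A : c != 0 -> eqv (scale_set c^-1 (scale_set c A)) A.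
Proof.
by move=> nc; apply: eqv_trans (scale_scale _ _ _) _; rewrite mulVf //; apply: scale1.
Qed.

Lemma scale_img c g A : eqv (scale_set c (img_set g A)) (img_set g (scale_set c A)).
Proof.
move=> x; split.
  by case=> y [[z [hz ->]] ->]; exists (c *: z); split; [exists z|rewrite scalemxAl].
by case=> y [[z [hz ->]] ->]; exists (z *m g); split; [exists z|rewrite scalemxAl].
Qed.

Lemma img_scale_mx c g A : eqv (img_set (c *: g) A) (scale_set c (img_set g A)).
Proof.
move=> x; split.
  by case=> y [hy ->]; exists (y *m g); split; [exists y|rewrite scalemxAr].
by case=> z [[y [hy ->]] ->]; exists y; split => //; rewrite scalemxAr.
Qed.

Lemma img_img g h A : eqv (img_set h (img_set g A)) (img_set (g *m h) A).
Proof.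
move=> x; split.
  by case=> y [[z [hz ->]] ->]; exists z; split => //; rewrite mulmxA.
by case=> z [hz ->]; exists (z *m g); split; [exists z|rewrite mulmxA].
Qed.

Lemma img1 A : eqv (img_set (1%:M : 'M[F]_2) A) A.
Proof.
move=> x; split; first by case=> y [hy ->]; rewrite mulmx1.
by move=> hx; exists x; rewrite mulmx1.
Qed.

Lemma img_invK g A : g \in unitmx -> eqv (img_set (invmx g) (img_set g A)) A.
Proof. by move=> ug; apply: eqv_trans (img_img _ _ _) _; rewrite mulmxV //; exact: img1. Qed.

Lemma img_Kinv g A : g \in unitmx -> eqv (img_set g (img_set (invmx g) A)) A.
Proof. by move=> ug; apply: eqv_trans (img_img _ _ _) _; rewrite mulVmx //; exact: img1. Qed.

Lemma img_lat g L : g \in unitmx -> is_lattice v L -> is_lattice v (img_set g L).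
Proof.
move=> ug /lat_latt [B [uB hB]].
have uBg : (B *m g) \in unitmx by rewrite unitmx_mul uB ug.
apply: lat_eqv (latt_lat uBg) _; apply: eqv_sym.
exact: eqv_trans (img_eqv _ hB) (img_latt _ _).
Qed.

Lemma strict_eqv A A' B B' :
  eqv A A' -> eqv B B' -> strict_sub A B -> strict_sub A' B'.
Proof.
move=> hA hB [h1 [x [h2 h3]]]; split; first by move=> z /hA /h1 /hB.
by exists x; split; [apply/hB|move/hA].
Qed.

Lemma strict_img g A B : g \in unitmx ->
  strict_sub A B -> strict_sub (img_set g A) (img_set g B).
Proof.
move=> ug [h1 [x [h2 h3]]]; split.
  by move=> z [y [hy ->]]; exists y; split => //; apply: h1.
exists (x *m g); split; first by exists x.
by case=> y [hy /(congr1 (mulmx^~ (invmx g)))]; rewrite !mulmxK // => exy; apply: h3; rewrite exy.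
Qed.

Lemma strict_scale c A B : c != 0 ->
  strict_sub A B -> strict_sub (scale_set c A) (scale_set c B).
Proof.
move=> nc [h1 [x [h2 h3]]]; split.
  by move=> z [y [hy ->]]; exists y; split => //; apply: h1.
exists (c *: x); split; first by exists x.
by case=> y [hy /(congr1 (fun w => c^-1 *: w))]; rewrite !scalerK // => exy; apply: h3; rewrite exy.
Qed.

Lemma vertexP (x : vertex v) :
  exists L0, is_lattice v L0 /\ forall M, sval x M <-> homclass v L0 M.
Proof. by case: (proj2_sig x) => L0 [h e]; exists L0; split => // M; rewrite e. Qed.

Lemma class_eqv (x : vertex v) L L' : sval x L -> eqv L L' -> sval x L'.
Proof.
have [L0 [hL0 hx]] := vertexP x.
move=> /hx [hL [c [nc hc]]] h; apply/hx; split; first exact: lat_eqv h.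
by exists c; split => // z; rewrite -h hc.
Qed.

Lemma class_scale (x : vertex v) L c : sval x L -> c != 0 -> sval x (scale_set c L).
Proof.
have [L0 [hL0 hx]] := vertexP x.
move=> /hx [hL [d [nd hd]]] nc; apply/hx; split.
  move: hL => /lat_latt [B [uB hB]].
  have uB' : (c *: B) \in unitmx by rewrite unitmxZ // unitfE.
  apply: lat_eqv (latt_lat uB') _.
  exact: eqv_sym (eqv_trans (scale_eqv _ hB) (scale_latt _ _)).
exists (c * d); split; first by rewrite mulf_neq0.
exact: eqv_trans (scale_eqv _ hd) (scale_scale _ _ _).
Qed.

Lemma class_same (x : vertex v) L1 L2 : sval x L1 -> sval x L2 ->
  exists c, c != 0 /\ eqv L2 (scale_set c L1).
Proof.
have [L0 [hL0 hx]] := vertexP x.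
move=> /hx [h1 [c1 [n1 e1]]] /hx [h2 [c2 [n2 e2]]].
exists (c2 / c1); split; first by rewrite mulf_neq0 // invr_eq0.
apply: eqv_trans e2 _.
have e : eqv (scale_set c1^-1 L1) L0 by apply: eqv_trans (scale_eqv _ e1) (scaleK _ _).
by apply: eqv_sym; apply: eqv_trans (eqv_sym (scale_scale _ _ _)) _; exact: scale_eqv.
Qed.

Lemma class_lat (x : vertex v) L : sval x L -> is_lattice v L.
Proof. by have [L0 [hL0 hx]] := vertexP x; case/hx. Qed.

Lemma vert_has (x : vertex v) : exists L, sval x L.
Proof.
have [L0 [hL0 hx]] := vertexP x.
exists L0; apply/hx; split => //.
by exists 1; split; [exact: oner_neq0|exact: eqv_sym (scale1 _)].
Qed.

Definition mkv L (h : is_lattice v L) : vertex v :=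
  exist _ (homclass v L) (ex_intro _ L (conj h erefl)).

Lemma mkv_in L (h : is_lattice v L) : sval (mkv h) L.
Proof.
by split => //; exists 1; split; [exact: oner_neq0|exact: eqv_sym (scale1 _)].
Qed.

Lemma vert_eq (x y : vertex v) L : sval x L -> sval y L -> x = y.
Proof.
move=> hx hy.
have transfer : forall (a b : vertex v) M, sval a L -> sval b L -> sval a M -> sval b M.
  move=> a b M ha hb hM.
  have [c [nc hc]] := class_same ha hM.
  by apply: class_eqv (eqv_sym hc); exact: class_scale.
case: x y hx hy transfer => C hC [C' hC'] /= hx hy transfer.
have e : C = C'.
  apply: functional_extensionality => M; apply: propositional_extensionality.
  split => hM.
    exact: (transfer (exist _ C hC) (exist _ C' hC') M hx hy hM).
  exact: (transfer (exist _ C' hC') (exist _ C hC) M hy hx hM).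
by subst C'; congr exist; apply: proof_irrelevance.
Qed.

Lemma adj_sym (x y : vertex v) : adj x y -> adj y x.
Proof.
case=> L [L' [pi [hx [hy [npi [vpi [s1 s2]]]]]]].
exists L', (scale_set pi L), pi; split => //; split; first exact: class_scale.
by do 3 (split => //); exact: strict_scale.
Qed.

Lemma adj_induced g f (x y : vertex v) : g \in unitmx -> induced_by g f ->
  adj x y -> adj (f x) (f y).
Proof.
move=> ug hf [L [L' [pi [hx [hy [npi [vpi [s1 s2]]]]]]]].
exists (img_set g L), (img_set g L'), pi.
do 2 (split; first exact: hf); do 2 (split => //).
split; last exact: strict_img.
exact: strict_eqv (eqv_sym (scale_img _ _ _)) _ (strict_img ug s1).
Qed.

Lemma walk_induced g f (x y : vertex v) k : g \in unitmx -> induced_by g f ->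
  walk x y k -> walk (f x) (f y) k.
Proof.
move=> ug hf; elim: k x => [|k IH] x /=; first by move=> ->.
by case=> z [a w]; exists (f z); split; [exact: adj_induced ug hf a|exact: IH].
Qed.

Definition rep (x : vertex v) : vset F :=
  proj1_sig (constructive_indefinite_description _ (vert_has x)).

Lemma rep_in (x : vertex v) : sval x (rep x).
Proof. exact: proj2_sig (constructive_indefinite_description _ (vert_has x)). Qed.

Definition act g (ug : g \in unitmx) (x : vertex v) : vertex v :=
  mkv (img_lat ug (class_lat (rep_in x))).

Lemma act_induced g (ug : g \in unitmx) : induced_by g (act ug).
Proof.
move=> x L hL /=.
have [c [nc hc]] := class_same (rep_in x) hL.
split; first exact: img_lat (class_lat hL).
exists c; split => //.
exact: eqv_trans (img_eqv _ hc) (eqv_sym (scale_img _ _ _)).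
Qed.

(* PGL_2(F) <= Aut(X): the inverse matrix induces the inverse map, and walks
   are transported in both directions, so distances are preserved. *)
Lemma pgl_isAut (f : vertex v -> vertex v) : inPGL f -> isAut f.
Proof.
case=> g [ug hf].
have ui : invmx g \in unitmx by rewrite unitmx_inv.
have hh := act_induced ui.
have fK : cancel f (act ui).
  move=> x; have [L hL] := vert_has x.
  apply: (vert_eq _ hL); exact: class_eqv (hh _ _ (hf _ _ hL)) (img_invK _ _).
have Kf : cancel (act ui) f.
  move=> y; have [L hL] := vert_has y.
  apply: (vert_eq _ hL); exact: class_eqv (hf _ _ (hh _ _ hL)) (img_Kinv _ _).
split; first by exists (act ui).
move=> x y n; split; case=> w hmin; split.
- exact: walk_induced ug hf w.
- by move=> k hk w2; apply: (hmin k hk); rewrite -(fK x) -(fK y); exact: walk_induced ui hh w2.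
- by rewrite -(fK x) -(fK y); exact: walk_induced ui hh w.
- by move=> k hk w2; apply: (hmin k hk); exact: walk_induced ug hf w2.
Qed.

Lemma pgl_Ghat e (f : vertex v -> vertex v) : inPGL f -> Ghat e f.
Proof. by move=> hf; split; [exact: pgl_isAut|move=> x1 x2 _; exists f]. Qed.

Lemma dist_le_mono (x y : vertex v) n m : (n <= m)%N -> dist_le x y n -> dist_le x y m.
Proof. by move=> nm [k [kn w]]; exists k; split => //; exact: leq_trans kn nm. Qed.

Lemma Ghat_mono e (f : vertex v -> vertex v) : Ghat e.+1 f -> Ghat e f.
Proof.
case=> hA hB; split => // x1 x2 a.
have [f' [hf' ag]] := hB _ _ a; exists f'; split => // y hy; apply: ag.
by case: hy => hy; [left|right]; exact: dist_le_mono (leqnSn e) hy.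
Qed.

Definition x0 : vertex v := mkv (latt_lat (unitmx1 F 2)).

Lemma latt1 x : latt 1%:M x <-> mx_vge 0 x.
Proof.
split; first by case=> u [hu ->]; rewrite mulmx1.
by move=> hx; exists x; rewrite mulmx1.
Qed.

Definition between (k : int) (L : vset F) :=
  is_lattice v L /\ (forall x, L x -> mx_vge 0 x) /\ (forall x, mx_vge k x -> L x).

(* A vertex at walk distance k from x0 has a representative between pi^k o^2
   and o^2: along each edge the representative can be rescaled to lie between
   pi times the next one and the next one. *)
Lemma walk_between k : forall y, walk y x0 k -> exists L, sval y L /\ between k%:Z L.
Proof.
elim: k => [|k IH] y /=.
  move=> ->; exists (latt 1%:M); split; first exact: mkv_in.
  by split; [exact: latt_lat (unitmx1 F 2)|split => x /latt1].
case=> z [[L1 [L2 [p [h1 [h2 [np [vp [[s1a _] [s2a _]]]]]]]]] w].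
have [Lz [hz [lz [bz1 bz2]]]] := IH z w.
have [c [nc hc]] := class_same hz h2.
have npc : p / c != 0 by rewrite mulf_neq0 // invr_eq0.
exists (scale_set (p / c) L1); split; first exact: class_scale.
split; first exact: class_lat (class_scale h1 npc).
split.
  move=> x [l [hl ->]].
  have : L2 (p *: l) by apply: s1a; exists l.
  move/hc => [zz [hzz e]].
  have -> : (p / c) *: l = zz by rewrite mulrC -scalerA e scalerA mulVf // scale1r.
  exact: bz1.
move=> x hx.
have hpi : vge (-1) (p^-1) by right; rewrite vV // vp.
have hx' : mx_vge k (p^-1 *: x) by apply: (mx_vge_le _ (mx_vge_scale hpi hx)); lia.
have : L2 (c *: (p^-1 *: x)) by apply/hc; exists (p^-1 *: x); split => //; apply: bz2.
move/s2a => hl1; exists (c *: (p^-1 *: x)); split => //.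
by rewrite !scalerA divfK // mulfV // scale1r.
Qed.

Lemma congruence_maps_into k m L (Y : 'M[F]_2) : between k L -> k <= m -> mx_vge m Y ->
  forall x, L x -> L (x *m (1%:M + Y)).
Proof.
move=> [hL [h1 h2]] km hY x hx; rewrite mulmxDr mulmx1; apply: lat_add => //.
by apply: h2; apply: mx_vge_le (mx_vge_mul (h1 _ hx) hY); lia.
Qed.

Lemma congruence_fix k m L (Y : 'M[F]_2) : between k L -> k <= m -> 1 <= m ->
  mx_vge m Y -> eqv (img_set (1%:M + Y) L) L.
Proof.
move=> hb km hm hY x; split.
  by case=> y [hy ->]; exact: congruence_maps_into hb km hY y hy.
move=> hx; have [Y' [hY' [e1 e2]]] := inv1D hm hY.
exists (x *m (1%:M + Y')); split; first exact: congruence_maps_into hb km hY' x hx.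
by rewrite -mulmxA e1 mulmx1.
Qed.

(* Stabilisers.  [stabilizes D h] : h fixes the vertex [o^2 D], i.e.
   D h = c U D with c a scalar and U in GL_2(o). *)
Definition stabilizes (D h : 'M[F]_2) := exists c U, c != 0 /\ mx_vge 0 U /\
  det2 U != 0 /\ v (det2 U) = 0 /\ D *m h = c *: (U *m D).

Lemma agree_stabilizes (w : vertex v) g g' D : g \in unitmx -> D \in unitmx ->
  sval w (img_set g (latt D)) -> sval w (img_set g' (latt D)) ->
  stabilizes D (g' *m invmx g).
Proof.
move=> ug uD h1 h2.
have [c [nc hc]] := class_same h1 h2.
have e1 : eqv (latt (D *m g')) (latt (c *: (D *m g))).
  apply: eqv_trans (eqv_sym (img_latt _ _)) _; apply: eqv_trans hc _.
  exact: eqv_trans (scale_eqv _ (img_latt _ _)) (scale_latt _ _).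
have [U [hU eU]] := latt_sub_mat (fun x => (e1 x).1).
have [U' [hU' eU']] := latt_sub_mat (fun x => (e1 x).2).
have uDg : (D *m g) \in unitmx by rewrite unitmx_mul uD ug.
have eUU : U' *m U = 1%:M.
  have : c *: (D *m g) = c *: ((U' *m U) *m (D *m g)).
    by rewrite {1}eU' eU -!scalemxAr mulmxA.
  move/(scalerI nc) => e.
  by rewrite -[U' *m U](mulmxK uDg) -e mulmxV.
have ed := congr1 det2 eUU; rewrite det2M det2_1 mulrC in ed.
have [nd vd] := unit_prod (det2_vge hU) (det2_vge hU') ed.
exists c, U; do 4 (split => //).
by rewrite mulmxA eU -scalemxAr -scalemxAl [U *m (D *m g)]mulmxA mulmxK.
Qed.

Lemma stab_relative (D U0 : 'M[F]_2) c0 : det2 D != 0 -> c0 != 0 ->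
  det2 U0 != 0 -> v (det2 U0) = 0 -> stabilizes D (c0 *: U0) ->
  exists l U1, vge 0 l /\ mx_vge 0 U1 /\ D *m U0 = l *: (U1 *m D).
Proof.
move=> nD n0 nU0 vU0 [c1 [U1 [n1 [hU1 [nU1 [vU1 e]]]]]].
exists (c1 / c0), U1; split; last first.
  split => //; apply: (scalerI n0); rewrite scalemxAr e scalerA mulrC divfK //.
have e2 : c0 ^+ 2 * det2 U0 = c1 ^+ 2 * det2 U1.
  have := congr1 det2 e; rewrite det2M !det2Z det2M => e'.
  by apply: (mulfI nD); rewrite e'; ring.
have n02 : c0 ^+ 2 != 0 by rewrite expf_neq0.
have n12 : c1 ^+ 2 != 0 by rewrite expf_neq0.
have := congr1 v e2; rewrite !vM // vU0 vU1 => ev.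
right; rewrite vM ?invr_eq0 // vV //; lia.
Qed.

Lemma test_vertices_entries (q : F) (e : int) (U0 : 'M[F]_2) : v q = e ->
  (exists l U1, vge 0 l /\ mx_vge 0 U1 /\ mk2 1 0 0 q *m U0 = l *: (U1 *m mk2 1 0 0 q)) ->
  (exists l U1, vge 0 l /\ mx_vge 0 U1 /\ mk2 q 0 0 1 *m U0 = l *: (U1 *m mk2 q 0 0 1)) ->
  (exists l U1, vge 0 l /\ mx_vge 0 U1 /\ mk2 1 1 0 q *m U0 = l *: (U1 *m mk2 1 1 0 q)) ->
  [/\ vge e (U0 0 1), vge e (U0 1 0) & vge e (U0 1 1 - U0 0 0)].
Proof.
move=> vq [l1 [U1 [hl1 [hU1 E1]]]] [l2 [U2 [hl2 [hU2 E2]]]] [l3 [U3 [hl3 [hU3 E3]]]].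
have hq : vge e q by right; rewrite vq.
have mulq l U i j : vge 0 l -> mx_vge 0 U -> vge e (l * U i j * q).
  by move=> hl hU; have := vgeM (vgeM hl (hU i j)) hq; rewrite !add0r.
have entry (A B : 'M[F]_2) i j : A = B -> A i j = B i j by move=> ->.
have scale_mul2E c (A B : 'M[F]_2) i j : (c *: (A *m B)) i j = c * (A i 0 * B 0 j + A i 1 * B 1 j).
  by rewrite mxE mul2E.
have e01 : U0 0 1 = l1 * U1 0 1 * q.
  have := entry _ _ 0 1 E1; rewrite mul2E scale_mul2E !mxE /= => E.
  by transitivity (1 * U0 0 1 + 0 * U0 1 1); [ring|rewrite E; ring].
have e10 : U0 1 0 = l2 * U2 1 0 * q.
  have := entry _ _ 1 0 E2; rewrite mul2E scale_mul2E !mxE /= => E.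
  by transitivity (0 * U0 0 0 + 1 * U0 1 0); [ring|rewrite E; ring].
have e00 : U0 0 0 + U0 1 0 = l3 * U3 0 0.
  have := entry _ _ 0 0 E3; rewrite mul2E scale_mul2E !mxE /= => E.
  by transitivity (1 * U0 0 0 + 1 * U0 1 0); [ring|rewrite E; ring].
have e11 : U0 0 1 + U0 1 1 = l3 * U3 0 0 + l3 * U3 0 1 * q.
  have := entry _ _ 0 1 E3; rewrite mul2E scale_mul2E !mxE /= => E.
  by transitivity (1 * U0 0 1 + 1 * U0 1 1); [ring|rewrite E; ring].
have ediff : U0 1 1 - U0 0 0 = l3 * U3 0 1 * q - U0 0 1 + U0 1 0.
  have -> : U0 1 1 = l3 * U3 0 0 + l3 * U3 0 1 * q - U0 0 1 by rewrite -e11; ring.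
  have -> : U0 0 0 = l3 * U3 0 0 - U0 1 0 by rewrite -e00; ring.
  by ring.
split; [by rewrite e01; apply: mulq|by rewrite e10; apply: mulq|].
rewrite ediff; apply: vgeD; last by rewrite e10; apply: mulq.
by apply: vgeB; [apply: mulq|rewrite e01; apply: mulq].
Qed.

Lemma stabilizer_congruence (q : F) (e : int) (h : 'M[F]_2) : q != 0 -> v q = e -> 1 <= e ->
  stabilizes 1%:M h -> stabilizes (mk2 1 0 0 q) h -> stabilizes (mk2 q 0 0 1) h ->
  stabilizes (mk2 1 1 0 q) h ->
  exists s X, s != 0 /\ mx_vge e X /\ h = s *: (1%:M + X).
Proof.
move=> nq vq he [c0 [U0 [n0 [hU0 [nU0 [vU0 e0]]]]]] s1 s2 s3.
rewrite mul1mx mulmx1 in e0; rewrite e0 in s1 s2 s3 *.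
have d1 : det2 (mk2 1 0 0 q) != 0 by rewrite /det2 !mxE /= mul0r subr0 mul1r.
have d2 : det2 (mk2 q 0 0 1) != 0 by rewrite /det2 !mxE /= mul0r subr0 mulr1.
have d3 : det2 (mk2 1 1 0 q) != 0 by rewrite /det2 !mxE /= mulr0 subr0 mul1r.
have [gb gx gda] := test_vertices_entries vq (stab_relative d1 n0 nU0 vU0 s1)
  (stab_relative d2 n0 nU0 vU0 s2) (stab_relative d3 n0 nU0 vU0 s3).
have [a1|[na va]] := vge0_cases (hU0 0 0).
  (* otherwise U0 is triangular modulo pi with a non-unit diagonal entry, so
     det U0 would not be a unit *)
  exfalso; apply: (not_vge (m := 1) nU0); first by rewrite vU0.
  have gd : vge 1 (U0 1 1).
    by rewrite -(subrK (U0 0 0) (U0 1 1)); apply: vgeD => //; apply: vge_le gda.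
  apply: vgeB; first by apply: vge_le (vgeM a1 gd); lia.
  by apply: vge_le (vgeM gb gx); lia.
exists (c0 * U0 0 0), ((U0 0 0)^-1 *: mk2 0 (U0 0 1) (U0 1 0) (U0 1 1 - U0 0 0)).
split; first by rewrite mulf_neq0.
split; first by rewrite -[e]add0r; apply: mx_vge_scale (vge_unitV na va) _;
  exact: mx_vge_mk2 (vge0 e) gb gx gda.
by apply: mxeq; rewrite !mxE /=; field; rewrite ?na.
Qed.

Definition complete := forall u : nat -> F,
  (forall N : int, exists M : nat, forall m n : nat, (M <= m)%N -> (M <= n)%N ->
     u m = u n \/ N <= v (u m - u n)) ->
  exists l : F, forall N : int, exists M : nat, forall n : nat, (M <= n)%N ->
     u n = l \/ N <= v (u n - l).

Lemma scalar_limit (u : nat -> F) : complete ->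
  (forall n, vge n%:Z (u n.+1 - u n)) -> exists l, forall n, vge n%:Z (l - u n).
Proof.
move=> hC step.
have tele n (k : nat) : vge n%:Z (u (n + k)%N - u n).
  elim: k => [|k IH]; first by rewrite addn0 subrr; left.
  rewrite addnS -(subrK (u (n + k)%N) (u (n + k).+1)) -addrA.
  by apply: vgeD => //; apply: vge_le (step _); lia.
have tail n m : (n <= m)%N -> vge n%:Z (u m - u n) by move=> nm; rewrite -(subnKC nm).
have [l hl] : exists l, forall N : int, exists M : nat, forall n : nat, (M <= n)%N ->
    u n = l \/ N <= v (u n - l).
  apply: hC => N; exists `|N|%N => m n hm hn.
  have hmn : vge N (u m - u n).
    have [nm|mn] := leqP n m; first by apply: vge_le (tail _ _ nm); lia.
    by rewrite -opprB; apply: vgeN; apply: vge_le (tail _ _ (ltnW mn)); lia.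
  by case: hmn => [/subr0_eq|]; [left|right].
exists l => n; have [M hM] := hl n.
have far : vge n%:Z (u (maxn M n) - l).
  by case: (hM _ (leq_maxl M n)) => [->|]; [rewrite subrr; left|right].
rewrite -(subrK (u (maxn M n)) l) -addrA.
by apply: vgeD; [rewrite -opprB; exact: vgeN|exact: tail _ _ (leq_maxr M n)].
Qed.

Lemma matrix_limit (P : nat -> 'M[F]_2) : complete ->
  (forall n, mx_vge n%:Z (P n.+1 - P n)) -> exists Q, forall n, mx_vge n%:Z (Q - P n).
Proof.
move=> hC step.
have entry ij : exists l, forall n, vge n%:Z (l - P n ij.1 ij.2).
  by apply: scalar_limit => // n; have := step n ij.1 ij.2; rewrite !mxE.
have [lim hlim] := choice _ entry.
exists (\matrix_(i, j) lim (i, j)) => n i j; rewrite !mxE.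
exact: hlim (i, j) n.
Qed.

Fixpoint prod_congr (X : nat -> 'M[F]_2) (n : nat) : 'M[F]_2 :=
  if n is m.+1 then (1%:M + X m) *m prod_congr X m else 1%:M.

Section CongruenceProducts.
Variable X : nat -> 'M[F]_2.
Hypothesis X_level : forall n, mx_vge n.+1 (X n).

Lemma prod_congr_near1 n : mx_vge 1 (prod_congr X n - 1%:M).
Proof.
elim: n => [|n IH] /=; first by rewrite subrr; exact: mx_vge0.
rewrite mulmxDl mul1mx addrAC; apply: mx_vge_add => //.
by apply: mx_vge_le (mx_vge_mul (X_level n) (mx_vge_of1 IH)); lia.
Qed.

Lemma prod_congr_step n : mx_vge n.+1 (prod_congr X n.+1 - prod_congr X n).
Proof.
rewrite /= mulmxDl mul1mx addrAC subrr add0r.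
by have := mx_vge_mul (X_level n) (mx_vge_of1 (prod_congr_near1 n)); rewrite addr0.
Qed.

End CongruenceProducts.

Lemma congr_sequence_limit (gs : nat -> 'M[F]_2) : complete ->
  (forall n, gs n \in unitmx) ->
  (forall n, exists s X, s != 0 /\ mx_vge n.+1 X /\ gs n.+1 = s *: ((1%:M + X) *m gs n)) ->
  exists g, g \in unitmx /\ forall n, (1 <= n)%N ->
    exists s Y, s != 0 /\ mx_vge n Y /\ g = s *: ((1%:M + Y) *m gs n).
Proof.
move=> hC ugs close.
have [s hs] := choice _ close.
have [X hX] := choice _ hs.
pose P := prod_congr X.
have X_level n : mx_vge n.+1 (X n) by have [_ []] := hX n.
have normal n : exists c, c != 0 /\ gs n = c *: (P n *m gs 0).
  elim: n => [|n [c [nc IH]]]; first by exists 1; rewrite oner_neq0 mul1mx scale1r.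
  have [ns [_ e]] := hX n.
  exists (s n * c); split; first by rewrite mulf_neq0.
  by rewrite e IH -scalemxAr scalerA mulmxA.
have step n : mx_vge n%:Z (P n.+1 - P n).
  by apply: mx_vge_le (prod_congr_step X_level n); rewrite lez_nat.
have [Q hQ] := matrix_limit hC step.
have near n : (1 <= n)%N ->
    exists s Y, s != 0 /\ mx_vge n Y /\ Q *m gs 0 = s *: ((1%:M + Y) *m gs n).
  move=> n1; have n1' : 1 <= n%:Z by rewrite lez_nat.
  have [Y [hY eQ]] := congr_factor n1' (prod_congr_near1 X_level n) (hQ n).
  have [c [nc eg]] := normal n.
  exists c^-1, Y; split; first by rewrite invr_eq0.
  by rewrite eg -scalemxAr scalerA mulVf // scale1r eQ mulmxA.
exists (Q *m gs 0); split => //.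
have [c [Y [nc [hY ->]]]] := near 1%N isT.
have [Y' [_ [_ e2]]] := inv1D (lexx 1) hY.
rewrite unitmxZ ?unitfE // unitmx_mul ugs andbT.
by case: (mulmx1_unit e2).
Qed.

Section Uniformizer.
Variable pi : F.
Hypotheses (pi_neq0 : pi != 0) (v_pi : v pi = 1).

(* Walks to x0.  A lattice o^2 E with E integral and v(det E) = 1 lies
   strictly between pi o^2 and o^2: its index in o^2 is that of a line. *)
Lemma strict_latt (X Y U : 'M[F]_2) : Y \in unitmx -> mx_vge 0 U -> det2 U != 0 ->
  1 <= v (det2 U) -> X = U *m Y -> strict_sub (latt X) (latt Y).
Proof.
move=> uY hU nU vdet eX; split; first exact: latt_sub hU eX.
apply: NNPP => hn.
have sub : forall x, latt Y x -> latt X x.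
  by move=> x hY; apply: NNPP => hX; apply: hn; exists x.
have [U' [hU' eY]] := latt_sub_mat sub.
have e1 : U' *m U = 1%:M.
  by rewrite -[U' *m U](mulmxK uY) -[U' *m U *m Y]mulmxA -eX -eY mulmxV.
have := congr1 det2 e1; rewrite det2M det2_1 mulrC => ed.
have [_ v0] := unit_prod (det2_vge hU) (det2_vge hU') ed.
by move: vdet; rewrite v0.
Qed.

Lemma elementary_strict (E : 'M[F]_2) : mx_vge 0 E -> det2 E != 0 -> v (det2 E) = 1 ->
  strict_sub (latt (pi%:M)) (latt E) /\ strict_sub (latt E) (latt 1%:M).
Proof.
move=> hE nE vE.
have uE := det2_unitmx nE.
split; last first.
  by apply: strict_latt (unitmx1 F 2) hE nE _ _; rewrite ?vE ?mulmx1.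
have nu : pi / det2 E != 0 by rewrite mulf_neq0 // invr_eq0.
have vu : v (pi / det2 E) = 0 by rewrite vM ?invr_eq0 // vV // v_pi vE.
have [_ e1] := adj2E E.
apply: (strict_latt (U := (pi / det2 E) *: adj2 E)) => //.
- by rewrite -[0]addr0; apply: mx_vge_scale (mx_vge_adj2 hE); right; rewrite vu.
- by rewrite det2Z det2_adj2 mulf_neq0 ?expf_neq0.
- by rewrite det2Z det2_adj2 vM ?expf_neq0 // expr2 vM // vu vE.
- by rewrite -scalemxAl e1 scalerA divfK // scalemx1.
Qed.

(* Hermite reduction step: an integral B with det B in pi o factors as E B'
   with E integral of determinant pi (one of [[pi, l], [0, 1]] or diag(1, pi))
   and B' integral. *)
Lemma hermite_step B : mx_vge 0 B -> vge 1 (det2 B) ->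
  exists E B', B = E *m B' /\ mx_vge 0 B' /\ mx_vge 0 E /\ det2 E = pi.
Proof.
move=> hB hd.
have hpi : vge (- 1) (pi^-1) by right; rewrite vV // v_pi.
have divp x : vge 1 x -> vge 0 (x / pi) by move=> hx; have := vgeM hx hpi; rewrite addrN.
have g1 := vge1 (lexx (0 : int)).
set a := B 0 0; set b := B 0 1; set c := B 1 0; set d := B 1 1.
have eB : B = mk2 a b c d by apply: mxeq; rewrite !mxE.
have hdet : det2 B = a * d - b * c by [].
have [c1|[nc vc]] := vge0_cases (hB 1 0).
  have [d1|[nd vd]] := vge0_cases (hB 1 1).
    (* second row in pi o^2: extract diag(1, pi) *)
    exists (mk2 1 0 0 pi), (mk2 a b (c / pi) (d / pi)); split.
      by rewrite eB; apply: mxeq; rewrite mul2E !mxE /=; field; rewrite ?pi_neq0.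
    split; first by apply: mx_vge_mk2; [exact: hB|exact: hB|exact: divp|exact: divp].
    split; first by apply: mx_vge_mk2; [exact: g1|exact: vge0|exact: vge0|right; rewrite v_pi].
    by rewrite /det2 !mxE /=; ring.
  (* d a unit: clear the (0,1) entry with the second row *)
  exists (mk2 pi (b / d) 0 1), (mk2 ((a - b / d * c) / pi) ((b - b / d * d) / pi) c d); split.
    by rewrite eB; apply: mxeq; rewrite mul2E !mxE /=; field; rewrite ?pi_neq0 ?nd.
  split.
    apply: mx_vge_mk2; [apply: divp|apply: divp|exact: hB|exact: hB].
      have -> : a - b / d * c = (a * d - b * c) / d by field.
      by rewrite -hdet; apply: vgeMr hd (vge_unitV nd vd).
    by rewrite divfK // subrr; exact: vge0.
  split; last by rewrite /det2 !mxE /=; ring.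
  apply: mx_vge_mk2; [by right; rewrite v_pi| |exact: vge0|exact: g1].
  exact: vgeMr (hB 0 1) (vge_unitV nd vd).
(* c a unit: clear the (0,0) entry with the second row *)
exists (mk2 pi (a / c) 0 1), (mk2 ((a - a / c * c) / pi) ((b - a / c * d) / pi) c d); split.
  by rewrite eB; apply: mxeq; rewrite mul2E !mxE /=; field; rewrite ?pi_neq0 ?nc.
split.
  apply: mx_vge_mk2; [apply: divp|apply: divp|exact: hB|exact: hB].
    by rewrite divfK // subrr; exact: vge0.
  have -> : b - a / c * d = - ((a * d - b * c) / c) by field.
  by rewrite -hdet; apply: vgeN; apply: vgeMr hd (vge_unitV nc vc).
split; last by rewrite /det2 !mxE /=; ring.
apply: mx_vge_mk2; [by right; rewrite v_pi| |exact: vge0|exact: g1].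
exact: vgeMr (hB 0 0) (vge_unitV nc vc).
Qed.

Lemma adj_elementary (E B' : 'M[F]_2) (y z : vertex v) : B' \in unitmx ->
  mx_vge 0 E -> det2 E = pi -> sval z (latt B') -> sval y (latt (E *m B')) -> adj y z.
Proof.
move=> uB hE dE hz hy; apply: adj_sym.
have nE : det2 E != 0 by rewrite dE.
have [s1 s2] := elementary_strict hE nE (etrans (congr1 v dE) v_pi).
exists (latt B'), (latt (E *m B')), pi; do 4 (split => //).
split.
  apply: strict_eqv (strict_img uB s1); last exact: img_latt.
  apply: eqv_trans (img_latt _ _) _; rewrite mul_scalar_mx.
  exact: eqv_sym (scale_latt _ _).
apply: strict_eqv (strict_img uB s2); first exact: img_latt.
by apply: eqv_trans (img_latt _ _) _; rewrite mul1mx.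
Qed.

Lemma walk_of_det n : forall B, mx_vge 0 B -> det2 B != 0 ->
  v (det2 B) = n%:Z -> forall y, sval y (latt B) -> walk y x0 n.
Proof.
elim: n => [|n IH] B hB nd vd y hy /=.
  have [e1 e2] := inv2E nd.
  have e : eqv (latt B) (latt 1%:M).
    move=> x; split; first by apply: (latt_sub hB); rewrite mulmx1.
    by apply: (latt_sub (inv2_int hB nd vd)); rewrite e2.
  exact: vert_eq (class_eqv hy e) (mkv_in _).
have hd1 : vge 1 (det2 B) by right; rewrite vd; lia.
have [E [B' [eB [hB' [hE dE]]]]] := hermite_step hB hd1.
have eD : det2 B = pi * det2 B' by rewrite eB det2M dE.
have nd' : det2 B' != 0 by apply/eqP => e0; move: nd; rewrite eD e0 mulr0 eqxx.
have vd' : v (det2 B') = n%:Z by have := vd; rewrite eD vM // v_pi; lia.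
have uB' := det2_unitmx nd'.
exists (mkv (latt_lat uB')); split.
  by apply: (adj_elementary uB' hE dE (mkv_in _)); rewrite -eB.
exact: IH hB' nd' vd' _ (mkv_in _).
Qed.

Lemma integral_multiple (B : 'M[F]_2) : exists N, mx_vge 0 (pi ^+ N *: B).
Proof.
pose N := (\sum_(i < 2) \sum_(j < 2) `|v (B i j)|)%N.
exists N => i j; rewrite mxE.
have [->|nb] := eqVneq (B i j) 0; first by rewrite mulr0; left.
have [nN vN] := vX N pi_neq0 v_pi.
right; rewrite vM // vN.
have le_ij : (`|v (B i j)| <= N)%N.
  rewrite /N (bigD1 i) //= (bigD1 j) //= -addnA; exact: leq_addr.
by move: le_ij; clearbody N; move: (v (B i j)) => z; lia.
Qed.

Lemma walk_to_base (y : vertex v) : exists k, walk y x0 k.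
Proof.
have [L hL] := vert_has y.
have [B0 [uB hB]] := (lat_latt L).1 (class_lat hL).
have [N hN] := integral_multiple B0.
have [nc _] := vX N pi_neq0 v_pi.
have nd : det2 (pi ^+ N *: B0) != 0 by rewrite det2Z mulf_neq0 ?expf_neq0 ?det2_unit.
have hy : sval y (latt (pi ^+ N *: B0)).
  exact: class_eqv (class_scale (class_eqv hL hB) nc) (scale_latt _ _).
have := det2_vge hN; rewrite addr0 => -[e|h0]; first by move: nd; rewrite e eqxx.
exists `|v (det2 (pi ^+ N *: B0))|%N; apply: (walk_of_det hN nd) hy; lia.
Qed.

Definition agrees_on_ball (f : vertex v -> vertex v) g (n : nat) :=
  forall y, dist_le y x0 n -> forall L, sval y L -> sval (f y) (img_set g L).

(* Two matrices inducing the same map on the ball of radius m >= 1 around x0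
   differ by an element of F^x (1 + pi^m M(o)): they agree at x0 and at the
   three test vertices, which lie at distance at most m. *)
Lemma ball_close f g g' (m : nat) : (1 <= m)%N -> g \in unitmx ->
  agrees_on_ball f g m -> agrees_on_ball f g' m ->
  exists s X, s != 0 /\ mx_vge m X /\ g' = s *: ((1%:M + X) *m g).
Proof.
move=> m1 ug ag ag'.
have [nq vq] := vX m pi_neq0 v_pi.
have hq : vge 0 (pi ^+ m) by right; rewrite vq.
have g1 := vge1 (lexx (0 : int)).
have stab D k : mx_vge 0 D -> det2 D != 0 -> v (det2 D) = k%:Z -> (k <= m)%N ->
    stabilizes D (g' *m invmx g).
  move=> hD nD vD km; have uD := det2_unitmx nD.
  have hw : dist_le (mkv (latt_lat uD)) x0 m.
    by exists k; split => //; exact: walk_of_det hD nD vD _ (mkv_in _).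
  by apply: (agree_stabilizes (w := f (mkv (latt_lat uD)))) => //;
    [apply: ag|apply: ag']; rewrite //; exact: mkv_in.
have d1 : det2 (mk2 1 0 0 (pi ^+ m)) = pi ^+ m by rewrite /det2 !mxE /=; ring.
have d2 : det2 (mk2 (pi ^+ m) 0 0 1) = pi ^+ m by rewrite /det2 !mxE /=; ring.
have d3 : det2 (mk2 1 1 0 (pi ^+ m)) = pi ^+ m by rewrite /det2 !mxE /=; ring.
have [s [X [ns [hX eh]]]] : exists s X, s != 0 /\ mx_vge m X /\
    g' *m invmx g = s *: (1%:M + X).
  apply: (stabilizer_congruence nq vq) => //.
  - by apply: (stab _ 0%N); rewrite ?det2_1 ?v1 ?oner_neq0 //; exact: mx_vge1.
  - apply: (stab _ m); rewrite ?d1 ?vq //.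
    exact: (mx_vge_mk2 g1 (vge0 0) (vge0 0) hq).
  - apply: (stab _ m); rewrite ?d2 ?vq //.
    exact: (mx_vge_mk2 hq (vge0 0) (vge0 0) g1).
  - apply: (stab _ m); rewrite ?d3 ?vq //.
    exact: (mx_vge_mk2 g1 g1 (vge0 0) hq).
exists s, X; do 2 (split => //).
by rewrite scalemxAl -eh mulmxKV.
Qed.

(* If g is congruent to g_n modulo F^x (1 + pi^n M(o)) for every n >= 1, and g_n
   induces f on the ball of radius n+1 around x0, then g induces f: a vertex
   at distance k has a representative L with pi^k o^2 <= L <= o^2, on which
   1 + pi^(k+1) M(o) acts trivially. *)
Lemma induced_of_congruent f g (gs : nat -> 'M[F]_2) :
  (forall n, agrees_on_ball f (gs n) n.+1) ->
  (forall n, (1 <= n)%N -> exists s Y, s != 0 /\ mx_vge n Y /\ g = s *: ((1%:M + Y) *m gs n)) ->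
  induced_by g f.
Proof.
move=> ag near y L hL.
have [k wk] := walk_to_base y.
have [Ls [hLs bLs]] := walk_between wk.
have [s [Y [ns [hY eg]]]] := near k.+1 isT.
have fs : sval (f y) (img_set (gs k.+1) Ls).
  by apply: ag hLs; exists k; split => //; rewrite ltnW.
have hg : sval (f y) (img_set g Ls).
  rewrite eg; apply: class_eqv (class_scale fs ns) _.
  apply: eqv_sym; apply: eqv_trans (img_scale_mx _ _ _) _; apply: scale_eqv.
  apply: eqv_trans (eqv_sym (img_img _ _ _)) _; apply: img_eqv.
  by apply: (congruence_fix bLs) hY; rewrite lez_nat.
have [c [nc hc]] := class_same hLs hL.
apply: class_eqv (class_scale hg nc) _.
exact: eqv_trans (scale_img _ _ _) (img_eqv _ (eqv_sym hc)).
Qed.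

Lemma Ghat_all_inPGL (f : vertex v -> vertex v) : complete ->
  (forall e : nat, (1 <= e)%N -> Ghat e f) -> inPGL f.
Proof.
move=> hC hf.
pose E := mk2 1 0 0 pi.
have dE : det2 E = pi by rewrite /det2 !mxE /=; ring.
have uE : E \in unitmx by apply: det2_unitmx; rewrite dE.
have hE : mx_vge 0 E.
  by apply: mx_vge_mk2; [exact: vge1|exact: vge0|exact: vge0|right; rewrite v_pi].
have edge : adj (mkv (latt_lat uE)) x0.
  by apply: (adj_elementary (unitmx1 F 2) hE dE (mkv_in _)); rewrite mulmx1; exact: mkv_in.
have ball n : exists g, g \in unitmx /\ agrees_on_ball f g n.+1.
  have [_ hG] := hf n.+1 isT.
  have [f' [[g [ug ind]] agree]] := hG _ _ edge.
  by exists g; split => // y hy L hL; rewrite agree; [exact: ind|right].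
have [gs hgs] := choice _ ball.
have close n : exists s X, s != 0 /\ mx_vge n.+1 X /\ gs n.+1 = s *: ((1%:M + X) *m gs n).
  have [ug ag] := hgs n; have [_ ag'] := hgs n.+1.
  apply: (ball_close (f := f)) => // y hy; apply: ag'.
  exact: dist_le_mono (leqnSn _) hy.
have [g [ug near]] := congr_sequence_limit hC (fun n => (hgs n).1) close.
by exists g; split => //; apply: (induced_of_congruent (gs := gs)) => // n; case: (hgs n).
Qed.

End Uniformizer.

End Tree.

Theorem mainTheorem4 (F : fieldType) (v : F -> int)
  (hF : is_nonarch_local_field v) :
  (forall f : vertex v -> vertex v,
      (forall e : nat, (1 <= e)%N -> Ghat e f) <-> inPGL f) /\
  (forall e : nat, (1 <= e)%N ->
     (forall f : vertex v -> vertex v, inPGL f -> Ghat e.+1 f) /\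
     (forall f : vertex v -> vertex v, Ghat e.+1 f -> Ghat e f) /\
     (forall f : vertex v -> vertex v, Ghat e f -> isAut f)).
Proof.
have [vM [vU [vS [complete _]]]] := hF.
have [pi [pi_neq0 v_pi]] := vS 1.
split=> [f|e _].
  split; first exact: (Ghat_all_inPGL vM vU pi_neq0 v_pi complete).
  by move=> hf e _; exact: pgl_Ghat.
split; [|split].
- by move=> f; exact: pgl_Ghat.
- by move=> f; exact: Ghat_mono.
- by move=> f [].
Qed.
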